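(* Let ${}^{n}\mathbf C$, ${}^{n+1}\mathbf C$ and ${}^{n}\mathbf C_{\mathrm i}$ be symmetric positive definite $3\times3$ real matrices. The matrix $\mathbf M:=\overline{({}^{n+1}\mathbf C)^{-1}\,{}^{n}\mathbf C}$ has positive real eigenvalues and is diagonalizable, so its principal square root $\mathbf F_{\mathrm{sh}}:=\mathbf M^{1/2}$ is well defined; put $${}^{\mathrm{est}}\mathbf C_{\mathrm i}:=\mathbf F_{\mathrm{sh}}^{-T}\,{}^{n}\mathbf C_{\mathrm i}\,\mathbf F_{\mathrm{sh}}^{-1}.$$ Then: (i) $\mathbf F_{\mathrm{sh}}^{-T}\,\overline{{}^{n}\mathbf C}\,\mathbf F_{\mathrm{sh}}^{-1}=\overline{{}^{n+1}\mathbf C}$, $\det\mathbf F_{\mathrm{sh}}=1$, and ${}^{\mathrm{est}}\mathbf C_{\mathrm i}$ is symmetric positive definite with $\det{}^{\mathrm{est}}\mathbf C_{\mathrm i}=\det{}^{n}\mathbf C_{\mathrm i}$; moreover ${}^{\mathrm{est}}\mathbf C_{\mathrm i}=(\overline{{}^{n+1}\mathbf C\,({}^{n}\mathbf C)^{-1}})^{1/2}\,{}^{n}\mathbf C_{\mathrm i}\,(\overline{({}^{n}\mathbf C)^{-1}\,{}^{n+1}\mathbf C})^{1/2}$. (ii) (Weak invariance) For every real $3\times3$ matrix $\mathbf F_0$ with $\det\mathbf F_0=1$, if ${}^{n}\mathbf C$, ${}^{n+1}\mathbf C$, ${}^{n}\mathbf C_{\mathrm i}$ are replaced by $\mathbf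 F_0^{-T}\,{}^{n}\mathbf C\,\mathbf F_0^{-1}$, $\mathbf F_0^{-T}\,{}^{n+1}\mathbf C\,\mathbf F_0^{-1}$, $\mathbf F_0^{-T}\,{}^{n}\mathbf C_{\mathrm i}\,\mathbf F_0^{-1}$, then the resulting estimate equals $\mathbf F_0^{-T}\,{}^{\mathrm{est}}\mathbf C_{\mathrm i}\,\mathbf F_0^{-1}$.
   Context: For a matrix $\mathbf M$ with $\det\mathbf M>0$, $\overline{\mathbf M}:=(\det\mathbf M)^{-1/3}\mathbf M$. The principal square root of a diagonalizable matrix with positive eigenvalues is the unique square root with positive eigenvalues. $\mathbf M^{-T}=(\mathbf M^{-1})^T$. *)

(* real numbers rendered as an arbitrary real closed field R. *)
From HB Require Import structures.
From mathcomp Require Import all_boot all_order all_algebra.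
From Stdlib Require Import ClassicalEpsilon.
Set Implicit Arguments. Unset Strict Implicit. Unset Printing Implicit Defensive.
Import Order.TTheory GRing.Theory Num.Theory.
Local Open Scope ring_scope.

Definition cbrt (R : rcfType) (x : R) : R :=
  epsilon (inhabits 0) (fun y : R => y ^+ 3 = x).

(* isochoric part  M-bar := (det M)^(-1/3) M *)
Definition isoc (R : rcfType) (M : 'M[R]_3) : 'M[R]_3 :=
  (cbrt (\det M))^-1 *: M.

Definition invT (R : rcfType) (M : 'M[R]_3) : 'M[R]_3 := (invmx M)^T.

Definition spd (R : rcfType) (A : 'M[R]_3) : Prop :=
  A^T = A /\ forall v : 'rV[R]_3, v != 0 -> 0 < (v *m A *m v^T) 0 0.

(* all (complex) eigenvalues of S are positive reals: the characteristic
   polynomial splits over R with positive roots *)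
Definition pos_eigs (R : rcfType) (S : 'M[R]_3) : Prop :=
  exists d : 'I_3 -> R, (forall i, 0 < d i) /\
    char_poly S = \prod_(i < 3) ('X - (d i)%:P).

(* principal square root: the (unique) square root with positive eigenvalues *)
Definition psqrt (R : rcfType) (M : 'M[R]_3) : 'M[R]_3 :=
  epsilon (inhabits 0) (fun S : 'M[R]_3 => S *m S = M /\ pos_eigs S).

Definition Fsh (R : rcfType) (C0 C1 : 'M[R]_3) : 'M[R]_3 :=
  psqrt (isoc (invmx C1 *m C0)).

Definition estCi (R : rcfType) (C0 C1 Ci : 'M[R]_3) : 'M[R]_3 :=
  invT (Fsh C0 C1) *m Ci *m invmx (Fsh C0 C1).

From HB Require Import structures.
From mathcomp Require Import all_boot all_order all_algebra.
From mathcomp Require Import complex.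
From mathcomp Require Import ring lra.
From Stdlib Require Import ClassicalEpsilon.
Import Order.TTheory GRing.Theory Num.Theory.
Local Open Scope ring_scope.
Set Implicit Arguments. Unset Strict Implicit.

(* After passing to isochoric parts B0, B1, the matrix M = B1^-1 B0 is the
   quotient of two symmetric positive definite forms, hence M = P^-1 diag(d) P
   with d > 0 (simultaneous diagonalization), and F = P^-1 diag(sqrt d) P.
   Square roots with positive eigenvalues are unique, so identities about F
   reduce to identities about squares: F^T and B1 F B1^-1 are both principal
   roots of M^T = B1 M B1^-1, whence F^T B1 F = B1 M = B0, which is (i); and,
   with E = F0^-1, the principal root of E^-1 M E is E^-1 F E, which is (ii). *)

Section CubeRoot.
Variable R : rcfType.
Implicit Types x y z : R.

Lemma cube_inj y z : y ^+ 3 = z ^+ 3 -> y = z.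
Proof.
move=> h; apply/eqP; rewrite -subr_eq0; apply/eqP.
have e : (y - z) * (y ^+ 2 + y * z + z ^+ 2) = 0.
  by rewrite -[RHS](subrr (z ^+ 3)) -{1}h; ring.
move/eqP: e; rewrite mulf_eq0 => /orP[/eqP // | /eqP e].
have h1 := sqr_ge0 (2 * y + z); have h2 := sqr_ge0 z; have h3 := sqr_ge0 y.
have /eqP : z ^+ 2 = 0 by nra.
have /eqP : y ^+ 2 = 0 by nra.
by rewrite !sqrf_eq0 => /eqP -> /eqP ->; rewrite subrr.
Qed.

Lemma cube_root_ex x : exists y, y ^+ 3 = x.
Proof.
have hab : - (1 + `|x|) <= 1 + `|x| by have := normr_ge0 x; lra.
have [|y _] := @poly_ivt R ('X^3 - x%:P) _ _ hab.
  rewrite !hornerE /=.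
  have h0 := normr_ge0 x; have h1 := ler_norm x.
  have h2 : - x <= `|x| by rewrite -normrN ler_norm.
  apply/andP; split; nra.
by rewrite /root !hornerE subr_eq0 => /eqP; exists y.
Qed.

Lemma cbrtE x : cbrt x ^+ 3 = x.
Proof. exact: (epsilon_spec _ (fun y : R => y ^+ 3 = x) (cube_root_ex x)). Qed.

Lemma cbrt_uniq x y : y ^+ 3 = x -> cbrt x = y.
Proof. by move=> h; apply: cube_inj; rewrite cbrtE. Qed.

Lemma cbrt_gt0 x : 0 < x -> 0 < cbrt x.
Proof.
move=> hx; rewrite ltNge; apply/negP => hc.
have : cbrt x ^+ 3 <= 0 by rewrite exprS mulr_le0_ge0 // sqr_ge0.
by rewrite cbrtE; lra.
Qed.

Lemma cbrt_eq0 x : (cbrt x == 0) = (x == 0).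
Proof. by rewrite -[in RHS](cbrtE x) expf_eq0. Qed.

Lemma cbrtM x y : cbrt (x * y) = cbrt x * cbrt y.
Proof. by apply: cbrt_uniq; rewrite exprMn !cbrtE. Qed.

Lemma cbrtV x : cbrt x^-1 = (cbrt x)^-1.
Proof. by apply: cbrt_uniq; rewrite exprVn !cbrtE. Qed.

End CubeRoot.

Section ConjDiag.
Variables (R : comUnitRingType) (n : nat).
Implicit Types (A P : 'M[R]_n) (a b d : 'I_n -> R).

Definition conj_diag P d : 'M[R]_n := invmx P *m diag_mx (\row_i d i) *m P.

Lemma invmxM A P : A \in unitmx -> P \in unitmx ->
  invmx (A *m P) = invmx P *m invmx A.
Proof.
move=> Au Pu; have APu : A *m P \in unitmx by rewrite unitmx_mul Au.
apply: (can_inj (mulmxK APu)); rewrite /= mulVmx //.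
by rewrite !mulmxA mulmxKV // mulVmx.
Qed.

Lemma horner_char_poly A x : (char_poly A).[x] = \det (x%:M - A).
Proof.
rewrite /char_poly -horner_evalE -det_map_mx; congr (\det _).
by apply/matrixP => i j; rewrite !mxE /= horner_evalE !hornerE hornerMn hornerX.
Qed.

Lemma char_poly_conj A P : P \in unitmx ->
  char_poly (P *m A *m invmx P) = char_poly A.
Proof.
move=> Pu; rewrite /char_poly /char_poly_mx.
have -> : 'X%:M - map_mx polyC (P *m A *m invmx P) =
    map_mx polyC P *m ('X%:M - map_mx polyC A) *m map_mx polyC (invmx P).
  rewrite mulmxBr mulmxBl !map_mxM; congr (_ - _).
  by rewrite mul_mx_scalar -scalemxAl -mul_mx_scalar -map_mxM mulmxV ?map_mx1 ?mul1mx.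
by rewrite !det_mulmx mulrAC -det_mulmx -map_mxM mulmxV // map_mx1 det1 mul1r.
Qed.

Lemma char_poly_tr A : char_poly A^T = char_poly A.
Proof.
rewrite /char_poly -det_tr /char_poly_mx.
by rewrite linearB /= tr_scalar_mx map_trmx trmxK.
Qed.

Lemma char_poly_conj_diag P d : P \in unitmx ->
  char_poly (conj_diag P d) = \prod_(i < n) ('X - (d i)%:P).
Proof.
move=> Pu; rewrite /conj_diag -{2}(invmxK P) char_poly_conj ?unitmx_inv //.
rewrite char_poly_trig ?diag_mx_is_trig //.
by apply: eq_bigr => i _; rewrite !mxE eqxx mulr1n.
Qed.

Lemma det_conj_diag P d : P \in unitmx -> \det (conj_diag P d) = \prod_i d i.
Proof.
move=> Pu; rewrite !det_mulmx det_inv det_diag mulrAC mulVr ?mul1r //.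
by apply: eq_bigr => i _; rewrite mxE.
Qed.

Lemma conj_diagM P a b : P \in unitmx ->
  conj_diag P a *m conj_diag P b = conj_diag P (fun i => a i * b i).
Proof.
move=> Pu; rewrite /conj_diag !mulmxA mulmxK // -!mulmxA (mulmxA (diag_mx _)).
by rewrite mulmx_diag; congr (_ *m (diag_mx _ *m _)); apply/rowP => i; rewrite !mxE.
Qed.

Lemma conj_diag1 P : P \in unitmx -> conj_diag P (fun=> 1) = 1%:M.
Proof.
move=> Pu; rewrite /conj_diag (_ : \row__ _ = const_mx 1).
  by rewrite diag_const_mx mulmx1 mulVmx.
by apply/rowP => i; rewrite !mxE.
Qed.

End ConjDiag.

Section PositiveEigenvalues.
Variable R : rcfType.
Local Notation M3 := 'M[R]_3.

Lemma pos_eigs_conj_diag (P : M3) d : P \in unitmx -> (forall i, 0 < d i) ->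
  pos_eigs (conj_diag P d).
Proof. by move=> Pu hd; exists d; rewrite char_poly_conj_diag. Qed.

Lemma pos_eigs_conj (P S : M3) : P \in unitmx -> pos_eigs S ->
  pos_eigs (P *m S *m invmx P).
Proof. by move=> Pu [d [hd hS]]; exists d; rewrite char_poly_conj. Qed.

Lemma pos_eigs_tr (S : M3) : pos_eigs S -> pos_eigs S^T.
Proof. by move=> [d [hd hS]]; exists d; rewrite char_poly_tr. Qed.

Lemma pos_eigs_shift_unit (S : M3) (a : R) : pos_eigs S -> 0 < a ->
  a%:M + S \in unitmx.
Proof.
move=> [d [hd hS]] ha.
have : \det ((- a)%:M - S) != 0.
  rewrite -horner_char_poly hS horner_prod; apply/prodf_neq0 => i _.
  by rewrite !hornerE; have := hd i; apply: contraTneq => h; lra.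
rewrite unitmxE unitfE; apply: contraNneq => h.
by rewrite -scalemx1 scaleNr scalemx1 -opprD -scaleN1r detZ h mulr0.
Qed.

(* With X := S - T, S X = X (-T); hence p(S) X = X p(-T) for every polynomial p.
   For p the characteristic polynomial of S the left side vanishes, while
   p(-T) = \prod_i (-(d_i + T)) is invertible. *)
Lemma pos_eigs_sqr_inj (S T : M3) : S *m S = T *m T ->
  pos_eigs S -> pos_eigs T -> S = T.
Proof.
move=> hST hS hT; apply/eqP; rewrite -subr_eq0; apply/eqP.
have [X defX] : exists X, X = S - T by exists (S - T).
rewrite -defX.
have hX : S *m X = X *m (- T).
  by rewrite defX; move: hST; rewrite !mulmxE mulrBr mulrN mulrBl => ->; rewrite opprB.
have hp p : horner_mx S p *m X = X *m horner_mx (- T) p.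
  elim/poly_ind: p => [|p c IH]; first by rewrite !rmorph0 mul0mx mulmx0.
  rewrite !rmorphD !rmorphM /= !horner_mx_X !horner_mx_C -!mulmxE.
  rewrite mulmxDl mulmxDr -mulmxA hX mulmxA IH -mulmxA.
  by rewrite !mul_mx_scalar mul_scalar_mx.
have hu : horner_mx (- T) (char_poly S) \in unitmx.
  case: hS => d [hd ->]; rewrite rmorph_prod.
  apply: (big_ind (fun M : M3 => M \in unitmx)) => [|A B hA hB|i _].
  - exact: unitmx1.
  - by rewrite -mulmxE unitmx_mul hA hB.
  rewrite rmorphB /= horner_mx_X horner_mx_C.
  have -> : - T - (d i)%:M = - ((d i)%:M + T) by rewrite opprD addrC.
  by rewrite -[_ \in unitmx]/(_ \is a GRing.unit) unitrN pos_eigs_shift_unit.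
have := hp (char_poly S); rewrite Cayley_Hamilton mul0mx => h0.
by rewrite -[X](mulmxK hu) -h0 mul0mx.
Qed.

Lemma psqrt_eq (M S : M3) : S *m S = M -> pos_eigs S -> psqrt M = S.
Proof.
move=> hS hpS.
have [] := epsilon_spec (inhabits 0) (fun S : M3 => S *m S = M /\ pos_eigs S)
  (ex_intro _ S (conj hS hpS)).
by rewrite -/(psqrt M) => h1 h2; apply: pos_eigs_sqr_inj => //; rewrite h1.
Qed.

Lemma psqrt_conj_diag (P : M3) d : P \in unitmx -> (forall i, 0 < d i) ->
  psqrt (conj_diag P d) = conj_diag P (fun i => Num.sqrt (d i)).
Proof.
move=> Pu hd; apply: psqrt_eq; last by apply: pos_eigs_conj_diag => // i; rewrite sqrtr_gt0.
rewrite conj_diagM //; congr (_ *m diag_mx _ *m _); apply/rowP => i.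
by rewrite !mxE -expr2 sqr_sqrtr // ltW.
Qed.

End PositiveEigenvalues.

Lemma conj_diag_sqrt (R : rcfType) n (P : 'M[R]_n) (d : 'I_n -> R) :
  P \in unitmx -> (forall i, 0 <= d i) ->
  conj_diag P (fun i => Num.sqrt (d i)) *m conj_diag P (fun i => Num.sqrt (d i))
  = conj_diag P d.
Proof.
move=> Pu hd; rewrite conj_diagM //; congr (_ *m diag_mx _ *m _).
by apply/rowP => i; rewrite !mxE -expr2 sqr_sqrtr.
Qed.

Lemma invmx_conj_diag (F : fieldType) n (P : 'M[F]_n) (d : 'I_n -> F) :
  P \in unitmx -> (forall i, d i != 0) ->
  invmx (conj_diag P d) = conj_diag P (fun i => (d i)^-1).
Proof.
move=> Pu hd; have Du : conj_diag P d \in unitmx.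
  by rewrite unitmxE det_conj_diag // unitfE; apply/prodf_neq0.
apply: (can_inj (mulmxK Du)); rewrite /= mulVmx // conj_diagM // -(conj_diag1 Pu).
by congr (_ *m diag_mx _ *m _); apply/rowP => i; rewrite !mxE mulVf.
Qed.

Lemma diagonalizable_conj_diag (F : fieldType) n (P : 'M[F]_n) (d : 'I_n -> F) :
  P \in unitmx -> diagonalizable (conj_diag P d).
Proof.
move=> Pu; exists P => //; rewrite /similar_to conjumx // /conj_diag.
by rewrite !mulmxA mulmxK // mulmxV // mul1mx diag_mx_is_diag.
Qed.

Lemma symmetric_conj_diag (R : rcfType) n (S : 'M[R]_n) : S^T = S ->
  exists2 P, P \in unitmx & exists d, S = conj_diag P d.
Proof.
move=> hS; pose f := real_complex R; pose SC := map_mx f S.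
have SCsym : SC \is symmetricmx.
  by apply/is_hermitianmxP; rewrite expr0 scale1r map_mx_id // /SC map_trmx hS.
have SCreal : SC \is a realmx.
  by apply/mxOverP => i j; rewrite mxE; apply/complex_realP; exists (S i j).
have SCherm := realsym_hermsym SCsym SCreal.
have /orthomx_spectralP hSC := hermitian_normalmx SCherm.
set U := spectralmx SC in hSC; set sp := spectral_diag SC in hSC.
have Uu : U \in unitmx by apply: spectral_unit.
have spreal : diag_mx sp \is a realmx.
  have /mxOverP hsp := hermitian_spectral_diag_real SCherm.
  by apply/mxOverP => i j; rewrite mxE; apply: rpredMn; exact: hsp.
have hsim : similar U SC (diag_mx sp).
  by apply/(similarP Uu); rewrite {1}hSC !mulmxA mulmxV // mul1mx.
have [Q /andP[Qreal Qu] /(similarP Qu) hQ] :=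
  real_similar (ex_intro2 _ _ U Uu hsim) SCreal spreal.
pose Qr := map_mx (@complex.Re R) Q; pose dr := map_mx (@complex.Re R) sp.
have eQ : map_mx f Qr = Q.
  by apply/matrixP => i j; rewrite !mxE; apply: RRe_real; exact: (mxOverP Qreal).
have edr : map_mx f dr = sp.
  apply/matrixP => i j; rewrite !mxE; apply: RRe_real.
  by have := (mxOverP spreal) j j; rewrite mxE eqxx mulr1n (ord1 i).
have Qru : Qr \in unitmx.
  move: Qu; rewrite !unitmxE !unitfE -eQ det_map_mx.
  by apply: contraNneq => ->; rewrite rmorph0.
have hQr : Qr *m S = diag_mx dr *m Qr.
  by apply: (@map_mx_inj _ _ f); rewrite !map_mxM eQ map_diag_mx edr.
exists Qr => //; exists (fun i => dr 0 i); rewrite /conj_diag.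
rewrite (_ : \row_i dr 0 i = dr); last by apply/rowP => i; rewrite mxE.
by rewrite -mulmxA -hQr mulKmx.
Qed.

Lemma mulmx_tr_gt0 (R : realFieldType) n (v : 'rV[R]_n) : v != 0 ->
  0 < (v *m v^T) 0 0.
Proof.
move=> hv; rewrite !mxE.
have [j hj] : exists j, v 0 j != 0.
  apply/existsP; move: hv; apply: contraR; rewrite negb_exists => /forallP h.
  by apply/eqP/rowP => k; rewrite !mxE; apply/eqP; move: (h k); rewrite negbK.
rewrite (bigD1 j) //=.
have h1 : 0 < v 0 j * v^T j 0 by rewrite mxE -expr2 lt_def sqrf_eq0 hj sqr_ge0.
have h2 : 0 <= \sum_(i < n | i != j) v 0 i * v^T i 0.
  by apply: sumr_ge0 => i _; rewrite mxE -expr2 sqr_ge0.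
lra.
Qed.

Lemma row_unitmx_neq0 (F : fieldType) n (P : 'M[F]_n) i : P \in unitmx ->
  row i P != 0.
Proof.
move=> Pu; apply/eqP => h.
have := mulmxK Pu (delta_mx 0 i : 'rV[F]_n); rewrite -rowE h mul0mx.
by move/rowP/(_ i); rewrite !mxE !eqxx => /eqP; rewrite eq_sym oner_eq0.
Qed.

Section PositiveDefinite.
Variable R : rcfType.
Local Notation M3 := 'M[R]_3.

(* Row i of P is a left eigenvector of conj_diag P d for the eigenvalue d i. *)
Lemma spd_conj_diag_gt0 (P : M3) d i : P \in unitmx -> spd (conj_diag P d) ->
  0 < d i.
Proof.
move=> Pu [_ hA]; have hv := row_unitmx_neq0 i Pu.
have hp : row i P *m conj_diag P d = d i *: row i P.
  rewrite -row_mul /conj_diag -mulmxA mulKVmx // row_mul row_diag_mx mxE.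
  by rewrite -scalemxAl -rowE.
by have := hA _ hv; rewrite hp -scalemxAl mxE pmulr_lgt0 // mulmx_tr_gt0.
Qed.

Lemma spd_congr (A G : M3) : spd A -> G \in unitmx -> spd (G^T *m A *m G).
Proof.
move=> [hs hA] Gu; split; first by rewrite !trmx_mul trmxK hs mulmxA.
move=> v hv; have GTu : G^T \in unitmx by rewrite unitmx_tr.
have hw : v *m G^T != 0 by apply: contra hv => /eqP h; rewrite -[v](mulmxK GTu) h mul0mx.
by have := hA _ hw; rewrite trmx_mul trmxK !mulmxA.
Qed.

Lemma spd_det_gt0 (A : M3) : spd A -> 0 < \det A.
Proof.
move=> hA; have [P Pu [d eA]] := symmetric_conj_diag (proj1 hA).
rewrite eA det_conj_diag // prodr_gt0 // => i _.
by apply: (spd_conj_diag_gt0 _ Pu); rewrite -eA.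
Qed.

Lemma spd_unitmx (A : M3) : spd A -> A \in unitmx.
Proof. by move/spd_det_gt0 => hA; rewrite unitmxE unitfE lt0r_neq0. Qed.

Lemma spd_sqrt (B : M3) : spd B ->
  exists2 S : M3, S^T = S & S *m S = B /\ S \in unitmx.
Proof.
move=> hB; have [P Pu [b eB]] := symmetric_conj_diag (proj1 hB).
have hb i : 0 < b i by apply: (spd_conj_diag_gt0 _ Pu); rewrite -eB.
have hS := conj_diag_sqrt Pu (fun i => ltW (hb i)).
set S := conj_diag P _ in hS.
have hpS : pos_eigs S by apply: pos_eigs_conj_diag => // i; rewrite sqrtr_gt0.
exists S; last split.
- have e1 : psqrt B = S by apply: psqrt_eq; rewrite // hS.
  have e2 : psqrt B = S^T.
    by apply: psqrt_eq; [rewrite -trmx_mul hS -eB (proj1 hB) | exact: pos_eigs_tr].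
  by rewrite -e2.
- by rewrite hS.
- by move: (spd_unitmx hB); rewrite eB -hS unitmx_mul => /andP[].
Qed.

(* B^-1 A = B^-1/2 (B^-1/2 A B^-1/2) B^1/2, and the middle factor is again
   symmetric positive definite. *)
Lemma spd_simultaneous_diag (A B : M3) : spd A -> spd B ->
  exists2 P, P \in unitmx &
    exists2 d, (forall i, 0 < d i) & invmx B *m A = conj_diag P d.
Proof.
move=> hA hB; have [S hSs [hSB Su]] := spd_sqrt hB.
pose G := invmx S.
have Gu : G \in unitmx by rewrite unitmx_inv.
have hGT : G^T = G by rewrite /G trmx_inv hSs.
have hH : spd (G^T *m A *m G) by apply: spd_congr.
have [Q Qu [h eH]] := symmetric_conj_diag (proj1 hH).
exists (Q *m S); first by rewrite unitmx_mul Qu.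
exists h => [i|]; first by apply: (spd_conj_diag_gt0 _ Qu); rewrite -eH.
have -> : conj_diag (Q *m S) h = G *m conj_diag Q h *m S.
  by rewrite /conj_diag invmxM // !mulmxA.
by rewrite -eH hGT /G -hSB invmxM // !mulmxA mulmxKV.
Qed.

End PositiveDefinite.

Section Isochoric.
Variable R : rcfType.
Local Notation M3 := 'M[R]_3.
Implicit Types A B E : M3.

Lemma det_isoc A : \det A != 0 -> \det (isoc A) = 1.
Proof. by move=> hA; rewrite detZ exprVn cbrtE mulVf. Qed.

Lemma isocM A B : isoc (A *m B) = isoc A *m isoc B.
Proof.
by rewrite /isoc det_mulmx cbrtM invfM -scalemxAl -scalemxAr scalerA mulrC.
Qed.

Lemma isoc_tr A : isoc A^T = (isoc A)^T.
Proof. by rewrite /isoc det_tr linearZ. Qed.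

Lemma isocV A : A \in unitmx -> isoc (invmx A) = invmx (isoc A).
Proof.
move=> Au; have dA : \det A != 0 by rewrite -unitfE -unitmxE.
rewrite /isoc det_inv cbrtV invrK invmxZ ?invrK //.
by rewrite unitmxZ // unitfE invr_eq0 cbrt_eq0.
Qed.

Lemma isoc_conj A E : E \in unitmx -> isoc (invmx E *m A *m E) = invmx E *m isoc A *m E.
Proof.
move=> Eu; rewrite /isoc !det_mulmx det_inv mulrAC mulVf ?mul1r.
  by rewrite -scalemxAr -scalemxAl.
by rewrite -unitfE -unitmxE.
Qed.

Lemma spd_isoc A : spd A -> spd (isoc A).
Proof.
move=> [hs hA]; have c_gt0 : 0 < (cbrt (\det A))^-1.
  by rewrite invr_gt0 cbrt_gt0 // spd_det_gt0.
split => [|v hv]; first by rewrite linearZ /= hs.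
by rewrite -scalemxAr -scalemxAl mxE mulr_gt0 // hA.
Qed.

Lemma isoc_invmx_mul_conj_diag A B : spd A -> spd B ->
  exists2 P, P \in unitmx &
    exists2 d, (forall i, 0 < d i) & isoc (invmx B *m A) = conj_diag P d.
Proof.
move=> hA hB; rewrite isocM isocV ?spd_unitmx //.
by apply: spd_simultaneous_diag; apply: spd_isoc.
Qed.

End Isochoric.

Section ShearEstimate.
Variable R : rcfType.
Local Notation M3 := 'M[R]_3.
Variables (C0 C1 : M3).
Hypotheses (hC0 : spd C0) (hC1 : spd C1).

Local Notation F := (Fsh C0 C1).
Local Notation B0 := (isoc C0).
Local Notation B1 := (isoc C1).

Lemma Fsh_conj_diag :
  exists2 P, P \in unitmx & exists2 r, (forall i, 0 < r i) & F = conj_diag P r.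
Proof.
have [P Pu [d d_gt0 hM]] := isoc_invmx_mul_conj_diag hC0 hC1.
exists P => //; exists (fun i => Num.sqrt (d i)) => [i|]; first by rewrite sqrtr_gt0.
by rewrite /Fsh hM psqrt_conj_diag.
Qed.

Lemma Fsh_sqr : F *m F = isoc (invmx C1 *m C0).
Proof.
have [P Pu [d d_gt0 hM]] := isoc_invmx_mul_conj_diag hC0 hC1.
by rewrite /Fsh hM psqrt_conj_diag // conj_diag_sqrt // => i; apply: ltW.
Qed.

Lemma pos_eigs_Fsh : pos_eigs F.
Proof. by have [P Pu [r r_gt0 ->]] := Fsh_conj_diag; apply: pos_eigs_conj_diag. Qed.

Lemma pos_eigs_invmx_Fsh : pos_eigs (invmx F).
Proof.
have [P Pu [r r_gt0 ->]] := Fsh_conj_diag.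
rewrite invmx_conj_diag // => [|i]; last by rewrite lt0r_neq0.
by apply: pos_eigs_conj_diag => // i; rewrite invr_gt0.
Qed.

Lemma det_Fsh : \det F = 1.
Proof.
have dF_gt0 : 0 < \det F.
  by have [P Pu [r r_gt0 ->]] := Fsh_conj_diag; rewrite det_conj_diag // prodr_gt0.
have : \det F ^+ 2 = 1.
  rewrite expr2 -det_mulmx Fsh_sqr det_isoc // det_mulmx det_inv.
  by rewrite mulf_neq0 ?invr_eq0 // lt0r_neq0 // spd_det_gt0.
by move/eqP; rewrite sqrf_eq1 => /orP[/eqP // | /eqP h]; move: dF_gt0; rewrite h; lra.
Qed.

Lemma Fsh_unitmx : F \in unitmx.
Proof. by rewrite unitmxE det_Fsh unitr1. Qed.

Let B1u : B1 \in unitmx. Proof. by apply/spd_unitmx/spd_isoc. Qed.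

Let isoc_invmx_mul : isoc (invmx C1 *m C0) = invmx B1 *m B0.
Proof. by rewrite isocM isocV // spd_unitmx. Qed.

(* F^T and B1 F B1^-1 are both principal square roots of M^T = B1 M B1^-1. *)
Lemma tr_Fsh : F^T = B1 *m F *m invmx B1.
Proof.
have hMT : (isoc (invmx C1 *m C0))^T = B1 *m isoc (invmx C1 *m C0) *m invmx B1.
  rewrite isoc_invmx_mul trmx_mul trmx_inv -!isoc_tr (proj1 hC0) (proj1 hC1).
  by rewrite mulKVmx.
apply: pos_eigs_sqr_inj; last 2 first.
- exact/pos_eigs_tr/pos_eigs_Fsh.
- exact/pos_eigs_conj/pos_eigs_Fsh.
by rewrite -(trmx_mul F F) Fsh_sqr hMT !mulmxA mulmxKV // -(mulmxA B1 F F) Fsh_sqr.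
Qed.

Lemma Fsh_congr_isoc : invT F *m B0 *m invmx F = B1.
Proof.
have -> : B0 = F^T *m B1 *m F.
  by rewrite tr_Fsh mulmxKV // -mulmxA Fsh_sqr isoc_invmx_mul mulKVmx.
rewrite /invT trmx_inv !mulmxA mulVmx ?unitmx_tr ?Fsh_unitmx // mul1mx.
by rewrite mulmxK // Fsh_unitmx.
Qed.

Lemma invmx_Fsh_sqr : invmx F *m invmx F = isoc (invmx C0 *m C1).
Proof.
rewrite -invmxM ?Fsh_unitmx // Fsh_sqr -isocV ?unitmx_mul ?unitmx_inv ?spd_unitmx //.
by rewrite invmxM ?unitmx_inv ?spd_unitmx // invmxK.
Qed.

Lemma psqrt_isoc_invmx_mul : psqrt (isoc (invmx C0 *m C1)) = invmx F.
Proof. exact: psqrt_eq invmx_Fsh_sqr pos_eigs_invmx_Fsh. Qed.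

Lemma psqrt_isoc_mul_invmx : psqrt (isoc (C1 *m invmx C0)) = invT F.
Proof.
apply: psqrt_eq; last exact/pos_eigs_tr/pos_eigs_invmx_Fsh.
rewrite /invT -trmx_mul invmx_Fsh_sqr -isoc_tr trmx_mul trmx_inv.
by rewrite (proj1 hC0) (proj1 hC1).
Qed.

Lemma spd_estCi Ci : spd Ci -> spd (estCi C0 C1 Ci).
Proof. by move=> hCi; apply: spd_congr; rewrite // unitmx_inv Fsh_unitmx. Qed.

Lemma det_estCi Ci : \det (estCi C0 C1 Ci) = \det Ci.
Proof. by rewrite !det_mulmx det_tr det_inv det_Fsh invr1 mul1r mulr1. Qed.

Lemma estCi_psqrt Ci :
  estCi C0 C1 Ci = psqrt (isoc (C1 *m invmx C0)) *m Ci *m psqrt (isoc (invmx C0 *m C1)).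
Proof. by rewrite psqrt_isoc_mul_invmx psqrt_isoc_invmx_mul. Qed.

Lemma Fsh_congr E : E \in unitmx ->
  Fsh (E^T *m C0 *m E) (E^T *m C1 *m E) = invmx E *m F *m E.
Proof.
move=> Eu; have ETu : E^T \in unitmx by rewrite unitmx_tr.
rewrite {1}/Fsh; have -> : invmx (E^T *m C1 *m E) *m (E^T *m C0 *m E)
    = invmx E *m (invmx C1 *m C0) *m E.
  by rewrite !invmxM ?unitmx_mul ?ETu ?Eu ?spd_unitmx // !mulmxA mulmxKV.
rewrite isoc_conj //; apply: psqrt_eq.
  by rewrite !mulmxA mulmxK // -(mulmxA _ F F) -/(Fsh C0 C1) Fsh_sqr.
by rewrite -{2}(invmxK E); apply: pos_eigs_conj; rewrite ?unitmx_inv //; exact: pos_eigs_Fsh.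
Qed.

Lemma estCi_congr E Ci : E \in unitmx ->
  estCi (E^T *m C0 *m E) (E^T *m C1 *m E) (E^T *m Ci *m E)
  = E^T *m estCi C0 C1 Ci *m E.
Proof.
move=> Eu; have Fu := Fsh_unitmx.
have EFu : invmx E *m F \in unitmx by rewrite unitmx_mul unitmx_inv Eu.
rewrite /estCi /invT Fsh_congr // !invmxM ?unitmx_inv // invmxK.
have ETu : E^T \in unitmx by rewrite unitmx_tr.
by rewrite !trmx_mul !mulmxA !trmx_inv (mulmxKV ETu) (mulmxK Eu).
Qed.

End ShearEstimate.

Unset Implicit Arguments.

Theorem mainTheorem7 (R : rcfType) (C0 C1 Ci : 'M[R]_3) :
  spd C0 -> spd C1 -> spd Ci ->
  (* M has positive real eigenvalues and is diagonalizable *)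
  (pos_eigs (isoc (invmx C1 *m C0)) /\ diagonalizable (isoc (invmx C1 *m C0))) /\
  (* F_sh is a square root of M with positive eigenvalues *)
  (Fsh C0 C1 *m Fsh C0 C1 = isoc (invmx C1 *m C0) /\ pos_eigs (Fsh C0 C1)) /\
  (* (i) *)
  (invT (Fsh C0 C1) *m isoc C0 *m invmx (Fsh C0 C1) = isoc C1 /\
   \det (Fsh C0 C1) = 1 /\
   spd (estCi C0 C1 Ci) /\
   \det (estCi C0 C1 Ci) = \det Ci /\
   estCi C0 C1 Ci =
     psqrt (isoc (C1 *m invmx C0)) *m Ci *m psqrt (isoc (invmx C0 *m C1))) /\
  (* (ii) weak invariance *)
  (forall F0 : 'M[R]_3, \det F0 = 1 ->
     estCi (invT F0 *m C0 *m invmx F0) (invT F0 *m C1 *m invmx F0)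
           (invT F0 *m Ci *m invmx F0)
     = invT F0 *m estCi C0 C1 Ci *m invmx F0).
Proof.
move=> hC0 hC1 hCi; split.
  have [P Pu [d d_gt0 ->]] := isoc_invmx_mul_conj_diag hC0 hC1.
  by split; [exact: pos_eigs_conj_diag | exact: diagonalizable_conj_diag].
split; first by split; [exact: Fsh_sqr | exact: pos_eigs_Fsh].
split; last first.
  move=> F0 hF0; apply: estCi_congr => //.
  by rewrite unitmx_inv unitmxE hF0 unitr1.
split; first exact: Fsh_congr_isoc.
split; first exact: det_Fsh.
split; first exact: spd_estCi.
by split; [exact: det_estCi | exact: estCi_psqrt].
Qed.
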